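(* Fix $\alpha\in(0,1/6)$. Let \[ \Delta_\alpha=\Big\{(x,z)\in\mathbb{R}^2:\ x\in\big(-\tfrac{2}{\alpha}+1-3\alpha,\ 1-3\alpha\big),\ z\ge -\tfrac{2}{\alpha\pi}\log\cos\Big(\tfrac{\alpha\pi}{2}\big(x-1+3\alpha+\tfrac1\alpha\big)\Big)\Big\}, \] let $d(x,z)$ be the Euclidean distance from $(x,z)$ to $\Delta_\alpha$, let $(\Delta_\alpha)^{2\alpha}=\{(x,z):d(x,z)\le 2\alpha\}$, and define $\varphi_\alpha:\mathrm{cl}\big((\Delta_\alpha)^{2\alpha}\setminus\Delta_\alpha\big)\to\mathbb{R}$ by \[ \varphi_\alpha(x,z)=-1+2\alpha-\sqrt{4\alpha^2-d(x,z)^2}. \] Then $\varphi=\varphi_\alpha$ is a convex function satisfying \[ \frac{\det D^2\varphi}{(1+|D\varphi|^2)^{3/2}}\le-\frac{\pi}{4}\varphi_z \] on its domain (at points where the derivatives are defined).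
   Context: Here $D$ and $D^2$ denote the gradient and Hessian in the variables $(x,z)$, and $\varphi_z$ the partial derivative in $z$. *)

From Stdlib Require Import Reals.
From Coquelicot Require Import Coquelicot.
Open Scope R_scope.

Definition eucl (p q : R * R) : R :=
  sqrt ((fst p - fst q) ^ 2 + (snd p - snd q) ^ 2).

Definition bnd (a x : R) : R :=
  - (2 / (a * PI)) * ln (cos (a * PI / 2 * (x - 1 + 3 * a + 1 / a))).

Definition Delta (a : R) (p : R * R) : Prop :=
  - 2 / a + 1 - 3 * a < fst p < 1 - 3 * a /\ snd p >= bnd a (fst p).

Definition dist_Delta (a : R) (p : R * R) : R :=
  real (Glb_Rbar (fun r => exists q, Delta a q /\ r = eucl p q)).

Definition closure2 (S : R * R -> Prop) (p : R * R) : Prop :=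
  forall eps, 0 < eps -> exists q, S q /\ eucl p q < eps.

Definition dom_phi (a : R) : R * R -> Prop :=
  closure2 (fun p => dist_Delta a p <= 2 * a /\ ~ Delta a p).

Definition phi (a : R) (p : R * R) : R :=
  -1 + 2 * a - sqrt (4 * a ^ 2 - dist_Delta a p ^ 2).

(* convexity of f on a (possibly non-convex) set D: convex along every
   segment contained in D *)
Definition convex_on (D : R * R -> Prop) (f : R * R -> R) : Prop :=
  forall p q : R * R, D p -> D q ->
    (forall t, 0 <= t <= 1 ->
       D (t * fst p + (1 - t) * fst q, t * snd p + (1 - t) * snd q)) ->
    forall t, 0 <= t <= 1 ->
      f (t * fst p + (1 - t) * fst q, t * snd p + (1 - t) * snd q)
      <= t * f p + (1 - t) * f q.

(* The distance d to the convex set Delta is convex and 1-Lipschitz, and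
   r |-> -sqrt (4 a^2 - r^2) is convex and nondecreasing on [0, 2a], so phi is convex.
   Off Delta, with p0 = (x0, bnd a x0) the nearest point of Delta, n = (sin t0, -cos t0) the
   outer normal there (t0 = th a x0) and s = sqrt (4 a^2 - d^2), the gradient of phi is
   (d / s) n.  Along the normal ray d grows linearly, so n is an eigenvector of the Hessian
   with eigenvalue 4 a^2 / s^3 and the determinant is this eigenvalue times the tangential
   second derivative.  The boundary has curvature (a pi / 2) cos t0, which bounds the
   tangential second derivative by (d / s) (a pi / 2) cos t0; with this bound both sides of
   the inequality equal pi d cos t0 / (4 s).  Inside Delta the gradient vanishes on upward
   rays, so the determinant is 0, and where d = 2a phi is not differentiable. *)

From Stdlib Require Import Reals Lra Psatz.
From Coquelicot Require Import Coquelicot.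
Open Scope R_scope.

Notation R2 := (prod_NormedModule R_AbsRing R_NormedModule R_NormedModule).

Definition line (q w : R * R) (t : R) : R * R := (fst q + t * fst w, snd q + t * snd w).

Definition convex_comb (s : R) (p q : R * R) : R * R :=
  (s * fst p + (1 - s) * fst q, s * snd p + (1 - s) * snd q).

Definition convex_set (K : R * R -> Prop) : Prop :=
  forall p q s, K p -> K q -> 0 <= s <= 1 -> K (convex_comb s p q).

Lemma line_0 q w : line q w 0 = q.
Proof. destruct q; unfold line; simpl; f_equal; ring. Qed.

Lemma eucl_sq p q : eucl p q ^ 2 = (fst p - fst q) ^ 2 + (snd p - snd q) ^ 2.
Proof. unfold eucl; apply pow2_sqrt, Rplus_le_le_0_compat; apply pow2_ge_0. Qed.

Lemma eucl_ge0 p q : 0 <= eucl p q.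
Proof. apply sqrt_pos. Qed.

Lemma eucl_sym p q : eucl p q = eucl q p.
Proof. unfold eucl; f_equal; ring. Qed.

Lemma eucl_refl p : eucl p p = 0.
Proof. unfold eucl. rewrite !Rminus_diag, pow_i, Rplus_0_r by lia. apply sqrt_0. Qed.

Lemma eucl_le_iff_sq q p y :
  eucl q p <= eucl q y <->
  (fst q - fst p) ^ 2 + (snd q - snd p) ^ 2 <= (fst q - fst y) ^ 2 + (snd q - snd y) ^ 2.
Proof.
  rewrite <- !eucl_sq. pose proof (eucl_ge0 q p). pose proof (eucl_ge0 q y).
  split; intros Hle; [apply pow_incr; lra | nra].
Qed.

Lemma eucl_eq0 p q : eucl p q = 0 -> p = q.
Proof.
  intros H. assert (Hsq : (fst p - fst q) ^ 2 + (snd p - snd q) ^ 2 = 0)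
    by (rewrite <- eucl_sq, H; ring).
  rewrite <- !Rsqr_pow2 in Hsq. apply Rplus_sqr_eq_0 in Hsq.
  destruct p, q; cbn [fst snd] in *. f_equal; lra.
Qed.

Lemma eucl_line_unit q w t :
  fst w ^ 2 + snd w ^ 2 = 1 -> 0 <= t -> eucl (line q w t) q = t.
Proof.
  intros Hw Ht. unfold eucl, line; cbn [fst snd].
  replace ((fst q + t * fst w - fst q) ^ 2 + (snd q + t * snd w - snd q) ^ 2)
    with (t ^ 2 * (fst w ^ 2 + snd w ^ 2)) by ring.
  rewrite Hw, Rmult_1_r. now apply sqrt_pow2.
Qed.

Lemma sqrt_sum_sq_triangle u1 v1 u2 v2 :
  sqrt ((u1 + u2) ^ 2 + (v1 + v2) ^ 2) <= sqrt (u1 ^ 2 + v1 ^ 2) + sqrt (u2 ^ 2 + v2 ^ 2).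
Proof.
  pose proof (@prod_norm_triangle R_AbsRing R_NormedModule R_NormedModule (u1, v1) (u2, v2)) as H.
  unfold prod_norm in H; simpl in H. unfold abs in H; simpl in H.
  now rewrite <- !(pow2_abs (_ + _)), <- (pow2_abs u1), <- (pow2_abs v1),
    <- (pow2_abs u2), <- (pow2_abs v2).
Qed.

Lemma sqrt_sum_sq_convex s u1 v1 u2 v2 : 0 <= s <= 1 ->
  sqrt ((s * u1 + (1 - s) * u2) ^ 2 + (s * v1 + (1 - s) * v2) ^ 2)
  <= s * sqrt (u1 ^ 2 + v1 ^ 2) + (1 - s) * sqrt (u2 ^ 2 + v2 ^ 2).
Proof.
  intros Hs.
  assert (Hscale : forall k u v, 0 <= k -> sqrt ((k * u) ^ 2 + (k * v) ^ 2) = k * sqrt (u ^ 2 + v ^ 2)).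
  { intros k u v Hk. replace ((k * u) ^ 2 + (k * v) ^ 2) with (k ^ 2 * (u ^ 2 + v ^ 2)) by ring.
    rewrite sqrt_mult by nra. now rewrite sqrt_pow2. }
  rewrite <- (Hscale s), <- (Hscale (1 - s)) by lra.
  apply sqrt_sum_sq_triangle.
Qed.

Lemma eucl_triangle p q r : eucl p r <= eucl p q + eucl q r.
Proof.
  unfold eucl.
  replace ((fst p - fst r) ^ 2 + (snd p - snd r) ^ 2) with
    (((fst p - fst q) + (fst q - fst r)) ^ 2 + ((snd p - snd q) + (snd q - snd r)) ^ 2) by ring.
  apply sqrt_sum_sq_triangle.
Qed.

Lemma eucl_convex_comb s q1 q2 p1 p2 : 0 <= s <= 1 ->
  eucl (convex_comb s q1 q2) (convex_comb s p1 p2) <= s * eucl q1 p1 + (1 - s) * eucl q2 p2.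
Proof.
  intros Hs. unfold eucl, convex_comb; cbn [fst snd].
  eapply Rle_trans; [| apply sqrt_sum_sq_convex; exact Hs].
  right; f_equal; ring.
Qed.

Lemma sqrt_sub_sq_concave rho d1 d2 t :
  0 <= rho -> d1 ^ 2 <= rho ^ 2 -> d2 ^ 2 <= rho ^ 2 -> 0 <= t <= 1 ->
  t * sqrt (rho ^ 2 - d1 ^ 2) + (1 - t) * sqrt (rho ^ 2 - d2 ^ 2)
  <= sqrt (rho ^ 2 - (t * d1 + (1 - t) * d2) ^ 2).
Proof.
  intros Hrho H1 H2 Ht.
  set (A := sqrt (rho ^ 2 - d1 ^ 2)). set (B := sqrt (rho ^ 2 - d2 ^ 2)).
  assert (HA : A ^ 2 = rho ^ 2 - d1 ^ 2) by (apply pow2_sqrt; lra).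
  assert (HB : B ^ 2 = rho ^ 2 - d2 ^ 2) by (apply pow2_sqrt; lra).
  assert (0 <= A) by apply sqrt_pos. assert (0 <= B) by apply sqrt_pos.
  clearbody A B.
  (* (d1, A) and (d2, B) lie on the circle of radius rho, so their convex combination lies inside *)
  assert (Hin : sqrt ((t * d1 + (1 - t) * d2) ^ 2 + (t * A + (1 - t) * B) ^ 2) <= rho).
  { eapply Rle_trans; [apply sqrt_sum_sq_convex; exact Ht |].
    replace (d1 ^ 2 + A ^ 2) with (rho ^ 2) by lra. replace (d2 ^ 2 + B ^ 2) with (rho ^ 2) by lra.
    rewrite sqrt_pow2 by lra. lra. }
  rewrite <- (sqrt_pow2 rho Hrho) in Hin.
  apply sqrt_le_0 in Hin; [| apply Rplus_le_le_0_compat; apply pow2_ge_0 | apply pow2_ge_0].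
  rewrite <- (sqrt_pow2 (t * A + (1 - t) * B)) by nra.
  apply sqrt_le_1_alt. lra.
Qed.

Lemma is_derive_line q w x : is_derive (line q w) x w.
Proof.
  unfold is_derive.
  apply (filterdiff_ext_lin _ (fun y : R => plus zero (scal y (w : R2)))).
  - apply (filterdiff_plus_fct (fun _ => q : R2) (fun t : R => scal t (w : R2))).
    + exact (@filterdiff_const R_AbsRing R_NormedModule R2 _ _ q).
    + apply filterdiff_linear. exact (@is_linear_scal_l R_AbsRing R2 w).
  - intros y. apply plus_zero_l.
Qed.

Lemma filterdiff_line {V : NormedModule R_AbsRing} (f : R * R -> V) q w L :
  filterdiff f (locally q) L -> is_derive (fun t => f (line q w t)) 0 (L w).
Proof.
  intros Hf. rewrite <- (line_0 q w) in Hf.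
  eapply filterdiff_ext_lin.
  - exact (filterdiff_comp' _ _ _ _ _ (is_derive_line q w 0) Hf).
  - intros y. simpl. destruct Hf as [Hlin _]. apply (linear_scal L Hlin).
Qed.

Lemma locally_line (P : R * R -> Prop) (q w : R * R) :
  locally q P -> locally 0 (fun t => P (line q w t)).
Proof.
  intros HP.
  assert (Hc : continuous (line q w) 0)
    by (apply (@ex_derive_continuous R_AbsRing R2); exists w; apply is_derive_line).
  unfold continuous in Hc. rewrite line_0 in Hc. apply Hc; exact HP.
Qed.

Lemma is_derive_fst (F : R -> R * R) x (l : R * R) :
  @is_derive R_AbsRing R2 F x l -> is_derive (fun t => fst (F t)) x (fst l).
Proof.
  intros H.
  exact (filterdiff_comp' _ (fun u : R2 => fst u) _ _ _ H (filterdiff_linear _ is_linear_fst)).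
Qed.

Lemma is_derive_snd (F : R -> R * R) x (l : R * R) :
  @is_derive R_AbsRing R2 F x l -> is_derive (fun t => snd (F t)) x (snd l).
Proof.
  intros H.
  exact (filterdiff_comp' _ (fun u : R2 => snd u) _ _ _ H (filterdiff_linear _ is_linear_snd)).
Qed.

Lemma derive_0_at_local_max (f : R -> R) x l :
  is_derive f x l -> locally x (fun y => f y <= f x) -> l = 0.
Proof.
  intros Hd [r Hmax]. apply is_derive_Reals in Hd.
  change l with (derive_pt f x (exist _ l Hd)).
  apply (deriv_maximum f (x - r) (x + r)); try (pose proof (cond_pos r); lra).
  intros y H1 H2. apply Hmax. change (Rabs (y - x) < r). apply Rabs_lt_between. lra.
Qed.

Lemma is_derive_le_of_right_bound (u F : R -> R) T r :
  is_derive u 0 T -> 0 < r -> (forall e, 0 < e < r -> u e - u 0 <= e * F e) ->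
  continuity_pt F 0 -> T <= F 0.
Proof.
  intros Hd Hr Hb Hc. apply is_derive_Reals in Hd.
  apply Rnot_lt_le. intros Hlt.
  set (eps := (T - F 0) / 2).
  assert (Heps : 0 < eps) by (unfold eps; lra).
  destruct (Hd eps Heps) as [d1 Hd1].
  destruct (continuity_pt_locally F 0) as [Hc' _]. destruct (Hc' Hc (mkposreal eps Heps)) as [d2 Hd2].
  set (e := Rmin (Rmin d1 d2) r / 2).
  assert (He : 0 < e /\ e < d1 /\ e < d2 /\ e < r).
  { pose proof (cond_pos d1). pose proof (cond_pos d2).
    pose proof (Rmin_l (Rmin d1 d2) r). pose proof (Rmin_r (Rmin d1 d2) r).
    pose proof (Rmin_l d1 d2). pose proof (Rmin_r d1 d2).
    assert (0 < Rmin (Rmin d1 d2) r) by (repeat apply Rmin_glb_lt; lra).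
    unfold e; lra. }
  assert (Hquot : Rabs ((u (0 + e) - u 0) / e - T) < eps)
    by (apply Hd1; [lra | rewrite Rabs_right; lra]).
  assert (HF : Rabs (F e - F 0) < eps).
  { apply Hd2. change (Rabs (e - 0) < d2). rewrite Rminus_0_r, Rabs_right; lra. }
  rewrite Rplus_0_l in Hquot. apply Rabs_lt_between in Hquot, HF.
  assert ((u e - u 0) / e <= F e).
  { apply Rmult_le_reg_r with e; [lra |].
    replace ((u e - u 0) / e * e) with (u e - u 0) by (field; lra).
    rewrite Rmult_comm. apply Hb. lra. }
  unfold eps in *. lra.
Qed.

Lemma convex_of_derive_nondecreasing (f f' : R -> R) lo hi :
  (forall x, lo < x < hi -> is_derive f x (f' x)) ->
  (forall x y, lo < x -> x <= y -> y < hi -> f' x <= f' y) ->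
  forall x y t, lo < x < hi -> lo < y < hi -> 0 <= t <= 1 ->
    f (t * x + (1 - t) * y) <= t * f x + (1 - t) * f y.
Proof.
  intros Hd Hmono.
  assert (Hlt : forall x y t, lo < x < hi -> lo < y < hi -> 0 < t < 1 -> x < y ->
    f (t * x + (1 - t) * y) <= t * f x + (1 - t) * f y).
  { intros x y t Hx Hy Ht Hxy.
    set (m := t * x + (1 - t) * y).
    assert (x < m < y) by (unfold m; split; nra).
    destruct (MVT_cor2 f f' x m) as [c1 [E1 Hc1]]; [lra | intros c Hc; apply is_derive_Reals, Hd; lra |].
    destruct (MVT_cor2 f f' m y) as [c2 [E2 Hc2]]; [lra | intros c Hc; apply is_derive_Reals, Hd; lra |].
    assert (f' c1 <= f' c2) by (apply Hmono; lra).
    replace (m - x) with ((1 - t) * (y - x)) in E1 by (unfold m; ring).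
    replace (y - m) with (t * (y - x)) in E2 by (unfold m; ring).
    assert (0 <= t * (1 - t) * (y - x) * (f' c2 - f' c1))
      by (repeat apply Rmult_le_pos; nra).
    nra. }
  intros x y t Hx Hy Ht.
  destruct (Req_dec t 0) as [-> | Ht0]; [replace (0 * x + (1 - 0) * y) with y by ring; lra |].
  destruct (Req_dec t 1) as [-> | Ht1]; [replace (1 * x + (1 - 1) * y) with x by ring; lra |].
  destruct (Rtotal_order x y) as [Hxy | [-> | Hxy]].
  - apply Hlt; auto; lra.
  - replace (t * y + (1 - t) * y) with y by ring. lra.
  - replace (t * x + (1 - t) * y) with ((1 - t) * y + (1 - (1 - t)) * x) by ring.
    pose proof (Hlt y x (1 - t) Hy Hx ltac:(lra) Hxy). lra.
Qed.

Lemma Rabs_sin_le x : Rabs (sin x) <= Rabs x.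
Proof.
  destruct (MVT_abs sin cos 0 x) as [c [E _]]; [intros; apply derivable_pt_lim_sin |].
  rewrite sin_0, !Rminus_0_r in E. rewrite E.
  pose proof (Rabs_pos x). assert (Rabs (cos c) <= 1) by (apply Rabs_le, COS_bound).
  nra.
Qed.

Lemma cos_le_add_dist u v : cos u <= cos v + Rabs (u - v).
Proof.
  destruct (MVT_abs cos (fun t => - sin t) v u) as [c [E _]]; [intros; apply derivable_pt_lim_cos |].
  pose proof (Rabs_pos (u - v)). assert (Rabs (- sin c) <= 1) by (apply Rabs_le; pose proof (SIN_bound c); lra).
  pose proof (Rle_abs (cos u - cos v)). nra.
Qed.

Lemma Rpower_3_2 x : 0 < x -> Rpower x (3 / 2) = x * sqrt x.
Proof.
  intros Hx. replace (3 / 2) with (1 + / 2) by field.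
  now rewrite Rpower_plus, Rpower_1, Rpower_sqrt.
Qed.

Lemma is_derive_eq (f : R -> R) x l1 l2 : is_derive f x l1 -> is_derive f x l2 -> l1 = l2.
Proof.
  intros H1 H2. rewrite <- (is_derive_unique _ _ _ H1). exact (is_derive_unique _ _ _ H2).
Qed.

Section NearestPoint.

Variable K : R * R -> Prop.
Hypothesis K_convex : convex_set K.

Definition nearest (q p : R * R) : Prop := K p /\ forall y, K y -> eucl q p <= eucl q y.

Definition set_dist (q : R * R) : R :=
  real (Glb_Rbar (fun r => exists p, K p /\ r = eucl q p)).

Lemma nearest_self q : K q -> nearest q q.
Proof. intros Hq. split; [exact Hq |]. intros y _. rewrite eucl_refl. apply eucl_ge0. Qed.

Lemma nearest_obtuse q p y : nearest q p -> K y ->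
  (fst q - fst p) * (fst y - fst p) + (snd q - snd p) * (snd y - snd p) <= 0.
Proof.
  intros [Hp Hmin] Hy.
  set (W := (fst q - fst p) * (fst y - fst p) + (snd q - snd p) * (snd y - snd p)).
  set (V := (fst y - fst p) ^ 2 + (snd y - snd p) ^ 2).
  (* moving from p towards y by s does not get closer to q *)
  assert (Hs : forall s, 0 < s <= 1 -> 2 * W <= s * V).
  { intros s Hs.
    pose proof (Hmin _ (K_convex y p s Hy Hp ltac:(lra))) as Hm.
    apply eucl_le_iff_sq in Hm. unfold convex_comb, W, V in *. cbn [fst snd] in Hm.
    destruct q as [qx qz], p as [px pz], y as [yx yz]; cbn [fst snd] in *.
    assert (s * (2 * ((qx - px) * (yx - px) + (qz - pz) * (yz - pz)))
            <= s * (s * ((yx - px) ^ 2 + (yz - pz) ^ 2))) by nra.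
    apply Rmult_le_reg_l in H; lra. }
  clearbody W V.
  destruct (Rle_dec W 0) as [HW | HW]; [exact HW | exfalso].
  assert (HV : 2 * W <= V) by (rewrite <- (Rmult_1_l V); apply Hs; lra).
  assert (HWV : 0 < W / V <= 1).
  { split; [apply Rdiv_lt_0_compat; lra |].
    apply Rmult_le_reg_r with V; [lra |]. field_simplify; lra. }
  pose proof (Hs (W / V) HWV) as Hsmall.
  replace (W / V * V) with W in Hsmall by (field; lra). lra.
Qed.

Lemma nearest_nonexpansive q1 p1 q2 p2 : nearest q1 p1 -> nearest q2 p2 ->
  (fst p1 - fst p2) ^ 2 + (snd p1 - snd p2) ^ 2 <= (fst q1 - fst q2) ^ 2 + (snd q1 - snd q2) ^ 2.
Proof.
  intros H1 H2.
  pose proof (nearest_obtuse q1 p1 p2 H1 (proj1 H2)).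
  pose proof (nearest_obtuse q2 p2 p1 H2 (proj1 H1)).
  destruct q1 as [a1 b1], q2 as [a2 b2], p1 as [c1 d1], p2 as [c2 d2]; cbn [fst snd] in *.
  set (Px := c1 - c2). set (Pz := d1 - d2). set (Qx := a1 - a2). set (Qz := b1 - b2).
  (* |P|^2 <= Q.P <= |Q| |P|, by the two obtuse angles and Cauchy-Schwarz *)
  assert (HPQ : Px ^ 2 + Pz ^ 2 <= Qx * Px + Qz * Pz) by (unfold Px, Pz, Qx, Qz; nra).
  assert (HCS : (Qx * Px + Qz * Pz) ^ 2 + (Qx * Pz - Qz * Px) ^ 2
                = (Qx ^ 2 + Qz ^ 2) * (Px ^ 2 + Pz ^ 2)) by ring.
  clearbody Px Pz Qx Qz.
  assert (0 <= (Qx * Pz - Qz * Px) ^ 2) by apply pow2_ge_0.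
  destruct (Req_dec (Px ^ 2 + Pz ^ 2) 0) as [HP0 | HP0]; [rewrite HP0; nra |].
  assert (0 < Px ^ 2 + Pz ^ 2) by (pose proof (pow2_ge_0 Px); pose proof (pow2_ge_0 Pz); lra).
  apply Rmult_le_reg_r with (Px ^ 2 + Pz ^ 2); nra.
Qed.

Lemma nearest_ray q p q' l : nearest q p -> 0 <= l ->
  fst q' - fst p = l * (fst q - fst p) -> snd q' - snd p = l * (snd q - snd p) ->
  nearest q' p.
Proof.
  intros Hn Hl E1 E2. split; [apply Hn |].
  intros y Hy. pose proof (nearest_obtuse q p y Hn Hy) as V.
  apply eucl_le_iff_sq.
  replace (fst q' - fst y) with ((fst q' - fst p) - (fst y - fst p)) by ring.
  replace (snd q' - snd y) with ((snd q' - snd p) - (snd y - snd p)) by ring.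
  rewrite E1, E2.
  destruct q as [qx qz], p as [px pz], y as [yx yz]; cbn [fst snd] in *.
  assert (0 <= l * - ((qx - px) * (yx - px) + (qz - pz) * (yz - pz))) by (apply Rmult_le_pos; lra).
  pose proof (pow2_ge_0 (yx - px)). pose proof (pow2_ge_0 (yz - pz)). nra.
Qed.

Lemma nearest_normal_ray q p n d t : nearest q p -> 0 < d ->
  fst q - fst p = d * fst n -> snd q - snd p = d * snd n -> fst n ^ 2 + snd n ^ 2 = 1 ->
  - d < t -> nearest (line q n t) p /\ eucl (line q n t) p = d + t.
Proof.
  intros Hn Hd Ex Ez Hunit Ht.
  assert (Ex' : fst (line q n t) - fst p = (d + t) * fst n)
    by (unfold line; cbn [fst]; replace (fst q + t * fst n - fst p) with (fst q - fst p + t * fst n)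
          by ring; rewrite Ex; ring).
  assert (Ez' : snd (line q n t) - snd p = (d + t) * snd n)
    by (unfold line; cbn [snd]; replace (snd q + t * snd n - snd p) with (snd q - snd p + t * snd n)
          by ring; rewrite Ez; ring).
  split.
  - apply (nearest_ray q p _ ((d + t) / d) Hn).
    + apply Rlt_le, Rdiv_lt_0_compat; lra.
    + rewrite Ex', Ex. field. lra.
    + rewrite Ez', Ez. field. lra.
  - unfold eucl. rewrite Ex', Ez'.
    replace (((d + t) * fst n) ^ 2 + ((d + t) * snd n) ^ 2)
      with ((d + t) ^ 2 * (fst n ^ 2 + snd n ^ 2)) by ring.
    rewrite Hunit, Rmult_1_r. apply sqrt_pow2. lra.
Qed.

Lemma nearest_eq_of_segment q p r : nearest q p -> 0 < r ->
  (forall t, 0 < t < r -> K (line p (fst q - fst p, snd q - snd p) t)) -> q = p.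
Proof.
  intros Hn Hr Hseg.
  pose proof (nearest_obtuse q p _ Hn (Hseg (r / 2) ltac:(lra))) as V.
  unfold line in V; cbn [fst snd] in V.
  apply eucl_eq0. apply Rle_antisym; [| apply eucl_ge0].
  assert (Hsq : eucl q p ^ 2 <= 0) by (rewrite eucl_sq; nra).
  pose proof (eucl_ge0 q p). nra.
Qed.

Lemma nearest_dist_lipschitz q p q' p' : nearest q p -> nearest q' p' ->
  eucl q' p' <= eucl q p + eucl q q'.
Proof.
  intros Hn Hn'. eapply Rle_trans; [apply Hn', (proj1 Hn) |].
  rewrite (eucl_sym q q'), Rplus_comm. apply eucl_triangle.
Qed.

Lemma set_dist_nearest q p : nearest q p -> set_dist q = eucl q p.
Proof.
  intros [Hp Hmin]. unfold set_dist.
  rewrite (is_glb_Rbar_unique _ (Finite (eucl q p))); [reflexivity |].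
  split.
  - intros x [y [Hy ->]]. simpl. now apply Hmin.
  - intros l Hl. apply Hl. now exists p.
Qed.

Hypothesis K_nearest : forall q, exists p, nearest q p.

Lemma set_dist_le q y : K y -> set_dist q <= eucl q y.
Proof.
  intros Hy. destruct (K_nearest q) as [p Hn].
  rewrite (set_dist_nearest q p Hn). now apply Hn.
Qed.

Lemma set_dist_ge0 q : 0 <= set_dist q.
Proof.
  destruct (K_nearest q) as [p Hn]. rewrite (set_dist_nearest q p Hn). apply eucl_ge0.
Qed.

Lemma set_dist_in q : K q -> set_dist q = 0.
Proof.
  intros Hq. apply Rle_antisym; [| apply set_dist_ge0].
  rewrite <- (eucl_refl q). now apply set_dist_le.
Qed.

Lemma set_dist_lipschitz q q' : set_dist q <= set_dist q' + eucl q q'.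
Proof.
  destruct (K_nearest q') as [p' Hn]. rewrite (set_dist_nearest q' p' Hn).
  eapply Rle_trans; [apply (set_dist_le q p' (proj1 Hn)) |].
  rewrite Rplus_comm. apply eucl_triangle.
Qed.

Lemma set_dist_convex q1 q2 s : 0 <= s <= 1 ->
  set_dist (convex_comb s q1 q2) <= s * set_dist q1 + (1 - s) * set_dist q2.
Proof.
  intros Hs.
  destruct (K_nearest q1) as [p1 H1]. destruct (K_nearest q2) as [p2 H2].
  rewrite (set_dist_nearest q1 p1 H1), (set_dist_nearest q2 p2 H2).
  eapply Rle_trans; [apply set_dist_le, (K_convex p1 p2 s (proj1 H1) (proj1 H2) Hs) |].
  now apply eucl_convex_comb.
Qed.

End NearestPoint.

Lemma locally_0_between lo hi : lo < 0 < hi -> locally 0 (fun t : R => lo < t < hi).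
Proof.
  intros H. assert (Hm : 0 < Rmin (- lo) hi) by (apply Rmin_glb_lt; lra).
  exists (mkposreal _ Hm). intros t Ht. change (Rabs (t - 0) < Rmin (- lo) hi) in Ht.
  rewrite Rminus_0_r in Ht. apply Rabs_lt_between in Ht.
  pose proof (Rmin_l (- lo) hi). pose proof (Rmin_r (- lo) hi). lra.
Qed.

Lemma right_derivative_zero (u : R -> R) l r :
  is_derive u 0 l -> 0 < r -> (forall t, 0 <= t < r -> u t = 0) -> l = 0.
Proof.
  intros Hd Hr Hz.
  assert (Hle : forall (v : R -> R) m, is_derive v 0 m -> (forall t, 0 <= t < r -> v t = 0) -> m <= 0).
  { intros v m Hv Hvz. apply (is_derive_le_of_right_bound v (fun _ => 0) m r Hv Hr).
    - intros e He. rewrite !Hvz by lra. lra.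
    - apply continuity_pt_const. now intros ? ?. }
  apply Rle_antisym; [now apply (Hle u) |].
  assert (- l <= 0); [| lra].
  apply (Hle (fun t => - u t)); [now apply (is_derive_opp u) |].
  intros t Ht. rewrite Hz by exact Ht. apply Ropp_0.
Qed.

Section DistanceCap.

Variable K : R * R -> Prop.
Hypothesis K_convex : convex_set K.
Hypothesis K_nearest : forall q, exists p, nearest K q p.
Variable a : R.
Hypothesis a_pos : 0 < a.

Definition phi_set (q : R * R) : R := -1 + 2 * a - sqrt (4 * a ^ 2 - set_dist K q ^ 2).

Lemma phi_set_convex p q t :
  set_dist K p <= 2 * a -> set_dist K q <= 2 * a -> 0 <= t <= 1 ->
  phi_set (convex_comb t p q) <= t * phi_set p + (1 - t) * phi_set q.
Proof.
  intros Hp Hq Ht. unfold phi_set.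
  pose proof (set_dist_ge0 K K_nearest p). pose proof (set_dist_ge0 K K_nearest q).
  pose proof (set_dist_ge0 K K_nearest (convex_comb t p q)).
  pose proof (set_dist_convex K K_convex K_nearest p q t Ht) as Hc.
  set (dp := set_dist K p) in *. set (dq := set_dist K q) in *.
  set (dm := set_dist K (convex_comb t p q)) in *.
  replace (4 * a ^ 2) with ((2 * a) ^ 2) by ring.
  pose proof (sqrt_sub_sq_concave (2 * a) dp dq t ltac:(lra)
    ltac:(apply pow_incr; lra) ltac:(apply pow_incr; lra) Ht).
  assert (sqrt ((2 * a) ^ 2 - (t * dp + (1 - t) * dq) ^ 2) <= sqrt ((2 * a) ^ 2 - dm ^ 2)).
  { apply sqrt_le_1_alt. assert (dm ^ 2 <= (t * dp + (1 - t) * dq) ^ 2) by (apply pow_incr; lra).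
    lra. }
  lra.
Qed.

Lemma phi_set_directional_derivative q p A B w1 w2 : nearest K q p -> eucl q p < 2 * a ->
  filterdiff phi_set (locally q) (fun v => A * fst v + B * snd v) ->
  A * w1 + B * w2
  = ((fst q - fst p) * w1 + (snd q - snd p) * w2) / sqrt (4 * a ^ 2 - eucl q p ^ 2).
Proof.
  intros Hn Hd Hf.
  assert (Hpos : 0 < 4 * a ^ 2 - ((fst q - fst p) ^ 2 + (snd q - snd p) ^ 2))
    by (rewrite <- eucl_sq; pose proof (eucl_ge0 q p); nra).
  (* phi_set lies below the cap centred at p and touches it at q *)
  set (cap := fun t => -1 + 2 * a
    - sqrt (4 * a ^ 2 - ((fst q + t * w1 - fst p) ^ 2 + (snd q + t * w2 - snd p) ^ 2))).
  assert (Hcap : is_derive cap 0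
    (((fst q - fst p) * w1 + (snd q - snd p) * w2) / sqrt (4 * a ^ 2 - eucl q p ^ 2))).
  { unfold cap. rewrite eucl_sq. auto_derive.
    - replace (fst q + 0 * w1 - fst p) with (fst q - fst p) by ring.
      replace (snd q + 0 * w2 - snd p) with (snd q - snd p) by ring. lra.
    - replace (fst q + 0 * w1 - fst p) with (fst q - fst p) by ring.
      replace (snd q + 0 * w2 - snd p) with (snd q - snd p) by ring.
      match goal with |- context [sqrt ?X] =>
        replace X with (4 * a ^ 2 - ((fst q - fst p) ^ 2 + (snd q - snd p) ^ 2)) by ring end.
      field. apply Rgt_not_eq, sqrt_lt_R0. lra. }
  pose proof (filterdiff_line _ q (w1, w2) _ Hf) as Hphi. cbn beta in Hphi.
  assert (Hdiff := is_derive_minus _ _ _ _ _ Hphi Hcap).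
  apply Rminus_diag_uniq.
  apply (derive_0_at_local_max _ 0 _ Hdiff), filter_forall.
  intros t. cbn [fst snd]. rewrite line_0.
  assert (Htouch : phi_set q = cap 0).
  { unfold phi_set, cap. rewrite (set_dist_nearest K q p Hn), eucl_sq. repeat f_equal; ring. }
  assert (Hbelow : phi_set (line q (w1, w2) t) <= cap t).
  { unfold phi_set, cap.
    pose proof (set_dist_le K K_nearest (line q (w1, w2) t) p (proj1 Hn)).
    pose proof (set_dist_ge0 K K_nearest (line q (w1, w2) t)).
    assert (set_dist K (line q (w1, w2) t) ^ 2 <= eucl (line q (w1, w2) t) p ^ 2)
      by (apply pow_incr; lra).
    replace ((fst q + t * w1 - fst p) ^ 2 + (snd q + t * w2 - snd p) ^ 2)
      with (eucl (line q (w1, w2) t) p ^ 2) by (rewrite eucl_sq; reflexivity).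
    apply Rplus_le_compat_l, Ropp_le_contravar, sqrt_le_1_alt. lra. }
  unfold minus, plus, opp; simpl. lra.
Qed.

Lemma phi_set_gradient q p A B : nearest K q p -> eucl q p < 2 * a ->
  filterdiff phi_set (locally q) (fun v => A * fst v + B * snd v) ->
  A = (fst q - fst p) / sqrt (4 * a ^ 2 - eucl q p ^ 2) /\
  B = (snd q - snd p) / sqrt (4 * a ^ 2 - eucl q p ^ 2).
Proof.
  intros Hn Hd Hf.
  pose proof (phi_set_directional_derivative q p A B 1 0 Hn Hd Hf) as Ex.
  pose proof (phi_set_directional_derivative q p A B 0 1 Hn Hd Hf) as Ez.
  split; [rewrite <- (Rmult_1_r A) | rewrite <- (Rmult_1_r B)].
  - replace (A * 1) with (A * 1 + B * 0) by ring. rewrite Ex. f_equal; ring.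
  - replace (B * 1) with (A * 0 + B * 1) by ring. rewrite Ez. f_equal; ring.
Qed.


Lemma phi_set_gradient_in q A B : K q ->
  filterdiff phi_set (locally q) (fun v => A * fst v + B * snd v) -> A = 0 /\ B = 0.
Proof.
  intros Hq Hf.
  assert (Hd : eucl q q < 2 * a) by (rewrite eucl_refl; lra).
  destruct (phi_set_gradient q q A B (nearest_self K q Hq) Hd Hf) as [-> ->].
  rewrite !Rminus_diag. split; apply Rdiv_0_l.
Qed.

Lemma phi_set_hessian_vanishes_on_ray q w r (gx gz : R * R -> R) (L : R * R -> R * R) :
  0 < r -> (forall t, 0 <= t < r -> K (line q w t)) ->
  locally q (fun y => filterdiff phi_set (locally y) (fun v => gx y * fst v + gz y * snd v)) ->
  filterdiff (fun y => (gx y, gz y)) (locally q) L ->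
  fst (L w) = 0 /\ snd (L w) = 0.
Proof.
  intros Hr Hray Hgrad Hhess.
  destruct (locally_line _ q w Hgrad) as [eps Heps].
  set (r' := Rmin eps r).
  assert (Hr' : 0 < r') by (apply Rmin_glb_lt; [apply cond_pos | exact Hr]).
  assert (Hzero : forall t, 0 <= t < r' -> gx (line q w t) = 0 /\ gz (line q w t) = 0).
  { intros t Ht. pose proof (Rmin_l eps r). pose proof (Rmin_r eps r).
    apply (phi_set_gradient_in (line q w t)); [apply Hray; unfold r' in *; lra |].
    apply Heps. change (Rabs (t - 0) < eps). rewrite Rminus_0_r, Rabs_right; unfold r' in *; lra. }
  pose proof (filterdiff_line (V := R2) _ q w L Hhess) as HG.
  split.
  - apply (right_derivative_zero (fun t => gx (line q w t)) _ r' (is_derive_fst _ _ _ HG) Hr').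
    intros t Ht. apply Hzero, Ht.
  - apply (right_derivative_zero (fun t => gz (line q w t)) _ r' (is_derive_snd _ _ _ HG) Hr').
    intros t Ht. apply Hzero, Ht.
Qed.

Lemma phi_set_hessian_normal q p n (gx gz : R * R -> R) (L : R * R -> R * R) :
  nearest K q p -> 0 < eucl q p < 2 * a ->
  fst q - fst p = eucl q p * fst n -> snd q - snd p = eucl q p * snd n ->
  fst n ^ 2 + snd n ^ 2 = 1 ->
  locally q (fun y => filterdiff phi_set (locally y) (fun v => gx y * fst v + gz y * snd v)) ->
  filterdiff (fun y => (gx y, gz y)) (locally q) L ->
  let k := 4 * a ^ 2 / sqrt (4 * a ^ 2 - eucl q p ^ 2) ^ 3 in
  fst (L n) = k * fst n /\ snd (L n) = k * snd n.
Proof.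
  intros Hn Hd Ex Ez Hunit Hgrad Hhess k.
  set (d := eucl q p) in *.
  set (slope := fun c t => (d + t) * c / sqrt (4 * a ^ 2 - (d + t) ^ 2)).
  assert (Hline : locally 0 (fun t =>
    gx (line q n t) = slope (fst n) t /\ gz (line q n t) = slope (snd n) t)).
  { generalize (filter_and _ _ (locally_line _ q n Hgrad)
      (locally_0_between (- d) (2 * a - d) ltac:(lra))).
    apply filter_imp. intros t [Hf Ht].
    destruct (nearest_normal_ray K K_convex q p n d t Hn ltac:(lra) Ex Ez Hunit ltac:(lra)) as [Hnt Hdt].
    destruct (phi_set_gradient _ p _ _ Hnt ltac:(lra) Hf) as [Gx Gz].
    rewrite Gx, Gz, Hdt. unfold slope, line; cbn [fst snd].
    split; f_equal.
    - replace (fst q + t * fst n - fst p) with (fst q - fst p + t * fst n) by ring. rewrite Ex. ring.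
    - replace (snd q + t * snd n - snd p) with (snd q - snd p + t * snd n) by ring. rewrite Ez. ring. }
  assert (Hslope : forall c, is_derive (slope c) 0 (k * c)).
  { intros c. assert (Hs : 0 < 4 * a ^ 2 - d ^ 2) by nra.
    assert (Hsq : sqrt (4 * a ^ 2 - d ^ 2) ^ 2 = 4 * a ^ 2 - d ^ 2) by (apply pow2_sqrt; lra).
    assert (0 < sqrt (4 * a ^ 2 - d ^ 2)) by (apply sqrt_lt_R0; lra).
    unfold slope, k. auto_derive.
    - replace (4 * (a * (a * 1)) + - ((d + 0) * ((d + 0) * 1))) with (4 * a ^ 2 - d ^ 2) by ring.
      repeat split; lra.
    - replace (4 * (a * (a * 1)) + - ((d + 0) * ((d + 0) * 1))) with (4 * a ^ 2 - d ^ 2) by ring.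
      set (s := sqrt (4 * a ^ 2 - d ^ 2)) in *. clearbody s.
      replace (4 * a ^ 2) with (s ^ 2 + d ^ 2) by lra. field. lra. }
  pose proof (filterdiff_line (V := R2) _ q n L Hhess) as HG.
  split.
  - apply (is_derive_eq (fun t => gx (line q n t)) 0); [exact (is_derive_fst _ _ _ HG) |].
    apply (is_derive_ext_loc (slope (fst n))); [| apply Hslope].
    apply (filter_imp _ _ (fun t H => eq_sym (proj1 H)) Hline).
  - apply (is_derive_eq (fun t => gz (line q n t)) 0); [exact (is_derive_snd _ _ _ HG) |].
    apply (is_derive_ext_loc (slope (snd n))); [| apply Hslope].
    apply (filter_imp _ _ (fun t H => eq_sym (proj2 H)) Hline).
Qed.

Lemma phi_set_not_differentiable_at_edge q A B : set_dist K q = 2 * a ->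
  ~ filterdiff phi_set (locally q) (fun v => A * fst v + B * snd v).
Proof.
  intros Hq Hf.
  destruct (K_nearest q) as [p Hn].
  set (d := eucl q p).
  assert (Hd : d = 2 * a) by (rewrite <- Hq; symmetry; apply set_dist_nearest, Hn).
  set (n := ((fst q - fst p) / d, (snd q - snd p) / d)).
  assert (Ex : fst q - fst p = d * fst n) by (unfold n; cbn [fst]; field; lra).
  assert (Ez : snd q - snd p = d * snd n) by (unfold n; cbn [snd]; field; lra).
  assert (Hunit : fst n ^ 2 + snd n ^ 2 = 1).
  { unfold n; cbn [fst snd]. replace 1 with (d ^ 2 / d ^ 2) by (field; lra).
    unfold d at 3. rewrite eucl_sq. field. lra. }
  set (T := A * - fst n + B * - snd n).
  assert (HT : is_derive (fun e => phi_set (line q (- fst n, - snd n) e)) 0 T)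
    by exact (filterdiff_line _ q (- fst n, - snd n) _ Hf).
  set (M := Rabs T + 1).
  (* backwards along the normal, phi_set drops like - sqrt (4 a e), faster than any linear rate *)
  assert (HTM : T <= - M).
  { apply (is_derive_le_of_right_bound _ (fun _ => - M) T (4 * a / (M ^ 2 + 1)) HT).
    - apply Rdiv_lt_0_compat; nra.
    - intros e [He0 He]. rewrite line_0.
      assert (HeM : (M ^ 2 + 1) * e < 4 * a).
      { apply Rmult_lt_reg_r with (/ (M ^ 2 + 1)); [apply Rinv_0_lt_compat; nra |].
        replace ((M ^ 2 + 1) * e * / (M ^ 2 + 1)) with e by (field; nra). exact He. }
      assert (HM1 : 1 <= M) by (unfold M; pose proof (Rabs_pos T); lra).
      assert (0 <= (M ^ 2 - 1) * e) by (apply Rmult_le_pos; nra).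
      assert (He2a : e < 2 * a) by lra.
      replace (line q (- fst n, - snd n) e) with (line q n (- e))
        by (unfold line; cbn [fst snd]; f_equal; ring).
      destruct (nearest_normal_ray K K_convex q p n d (- e) Hn ltac:(lra) Ex Ez Hunit ltac:(lra))
        as [Hne Hde].
      unfold phi_set. rewrite Hq, (set_dist_nearest K _ p Hne), Hde, Hd.
      replace (4 * a ^ 2 - (2 * a) ^ 2) with 0 by ring. rewrite sqrt_0.
      replace (4 * a ^ 2 - (2 * a + - e) ^ 2) with (4 * a * e - e ^ 2) by ring.
      assert (M * e <= sqrt (4 * a * e - e ^ 2)).
      { rewrite <- (sqrt_pow2 (M * e)) by nra. apply sqrt_le_1_alt. nra. }
      lra.
    - apply continuity_pt_const. now intros ? ?. }
  pose proof (Rle_abs (- T)). rewrite Rabs_Ropp in H. unfold M in HTM. lra.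
Qed.

End DistanceCap.

Definition th (a x : R) : R := a * PI / 2 * (x - 1 + 3 * a + 1 / a).

Lemma th_sub a x y : th a x - th a y = a * PI / 2 * (x - y).
Proof. unfold th; ring. Qed.

Lemma th_range a x : 0 < a ->
  (- 2 / a + 1 - 3 * a < x < 1 - 3 * a <-> - (PI / 2) < th a x < PI / 2).
Proof.
  intros ha. pose proof PI_RGT_0. assert (0 < a * PI / 2) by nra.
  assert (E1 : th a x = a * PI / 2 * (x - (- 2 / a + 1 - 3 * a)) - PI / 2)
    by (unfold th; field; lra).
  assert (E2 : th a x = a * PI / 2 * (x - (1 - 3 * a)) + PI / 2) by (unfold th; field; lra).
  rewrite E1 at 1. rewrite E2.
  split; intros [H1 H2]; split; nra.
Qed.

Lemma Delta_th a p : 0 < a ->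
  Delta a p <-> - (PI / 2) < th a (fst p) < PI / 2 /\ bnd a (fst p) <= snd p.
Proof. intros ha. unfold Delta. rewrite (th_range a (fst p) ha). lra. Qed.

Lemma bnd_derive a x : 0 < a -> - (PI / 2) < th a x < PI / 2 ->
  is_derive (bnd a) x (tan (th a x)).
Proof.
  intros ha Hx. pose proof PI_RGT_0.
  assert (Hc : 0 < cos (th a x)) by (apply cos_gt_0; lra).
  unfold bnd, th in *. auto_derive; [exact Hc |].
  unfold tan. replace (x + - (1) + 3 * a + 1 / a) with (x - 1 + 3 * a + 1 / a) by ring.
  field. split; lra.
Qed.

Lemma bnd_convex a x y t : 0 < a ->
  - (PI / 2) < th a x < PI / 2 -> - (PI / 2) < th a y < PI / 2 -> 0 <= t <= 1 ->
  bnd a (t * x + (1 - t) * y) <= t * bnd a x + (1 - t) * bnd a y.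
Proof.
  intros ha Hx Hy Ht. rewrite <- th_range in Hx, Hy by exact ha.
  apply (convex_of_derive_nondecreasing (bnd a) (fun x => tan (th a x))
    (- 2 / a + 1 - 3 * a) (1 - 3 * a)); auto.
  - intros z Hz. apply bnd_derive; [exact ha |]. now apply th_range.
  - intros u v Hu Huv Hv.
    assert (- (PI / 2) < th a u < PI / 2) by (apply th_range; auto; lra).
    assert (- (PI / 2) < th a v < PI / 2) by (apply th_range; auto; lra).
    destruct (Req_dec u v) as [-> | Hne]; [lra |].
    left. apply tan_increasing; try lra.
    pose proof (th_sub a v u). pose proof PI_RGT_0.
    assert (0 < a * PI / 2 * (v - u)) by (apply Rmult_lt_0_compat; nra). lra.
Qed.

Lemma convex_comb_between lo hi x y s : lo < x < hi -> lo < y < hi -> 0 <= s <= 1 ->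
  lo < s * x + (1 - s) * y < hi.
Proof.
  intros Hx Hy Hs.
  assert (0 <= s * Rabs (x - y)) by (apply Rmult_le_pos; [lra | apply Rabs_pos]).
  assert (0 <= (1 - s) * Rabs (x - y)) by (apply Rmult_le_pos; [lra | apply Rabs_pos]).
  destruct (Rle_lt_dec x y) as [Hxy | Hxy];
    [rewrite Rabs_left1 in * by lra | rewrite Rabs_right in * by lra]; split; nra.
Qed.

Lemma Delta_convex a : 0 < a -> convex_set (Delta a).
Proof.
  intros ha p q s Hp Hq Hs.
  pose proof Hp as [Hp1 Hp2]. pose proof Hq as [Hq1 Hq2].
  apply Delta_th in Hp, Hq; auto.
  unfold Delta, convex_comb; cbn [fst snd]. split.
  - now apply convex_comb_between.
  - pose proof (bnd_convex a (fst p) (fst q) s ha (proj1 Hp) (proj1 Hq) Hs). nra.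
Qed.

Lemma Delta_up a p t : Delta a p -> 0 <= t -> Delta a (line p (0, 1) t).
Proof.
  intros [Hx Hz] Ht. unfold Delta, line; cbn [fst snd].
  rewrite Rmult_0_r, Rplus_0_r. split; [exact Hx | lra].
Qed.

Lemma bnd_continuous a x : 0 < a -> - (PI / 2) < th a x < PI / 2 -> continuity_pt (bnd a) x.
Proof.
  intros ha Hx. apply derivable_continuous_pt.
  exists (tan (th a x)). apply is_derive_Reals, bnd_derive; assumption.
Qed.

Lemma bnd_gt_near_ends a x B : 0 < a -> 0 < B -> - (PI / 2) < th a x < PI / 2 ->
  PI / 2 - exp (- (a * PI / 2 * B)) < Rabs (th a x) -> B < bnd a x.
Proof.
  intros ha hB Hx Hend. pose proof PI_RGT_0.
  assert (Hc : 0 < cos (th a x)) by (apply cos_gt_0; lra).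
  (* cos (th a x) = sin (PI/2 - |th a x|) < PI/2 - |th a x| < exp (- a PI B / 2) *)
  assert (Hsmall : cos (th a x) < exp (- (a * PI / 2 * B))).
  { assert (E : cos (th a x) = sin (PI / 2 - Rabs (th a x))).
    { rewrite sin_minus, sin_PI2, cos_PI2.
      destruct (Rle_lt_dec 0 (th a x)); [rewrite Rabs_right by lra | rewrite Rabs_left, cos_neg by lra];
        ring. }
    rewrite E. eapply Rlt_trans; [apply sin_lt_x |]; apply Rabs_lt_between in Hx; lra. }
  assert (Hln : ln (cos (th a x)) < - (a * PI / 2 * B)).
  { rewrite <- (ln_exp (- (a * PI / 2 * B))). apply ln_increasing; assumption. }
  unfold bnd. fold (th a x).
  assert (0 < a * PI) by nra.
  apply Rmult_lt_reg_r with (a * PI / 2); [nra |].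
  replace (- (2 / (a * PI)) * ln (cos (th a x)) * (a * PI / 2)) with (- ln (cos (th a x)))
    by (field; lra).
  lra.
Qed.

Lemma continuity_pt_Rmax_0 y : continuity_pt (Rmax 0) y.
Proof.
  apply (continuity_pt_ext (fun t => (t + Rabs t) * / 2)).
  - intros t. unfold Rmax. destruct Rle_dec; unfold Rabs; destruct Rcase_abs; lra.
  - apply (continuity_pt_mult (fun t => t + Rabs t) (fun _ => / 2)).
    + apply (continuity_pt_plus (fun t => t) Rabs).
      * apply derivable_continuous_pt, derivable_pt_id.
      * apply Rcontinuity_abs.
    + apply continuity_pt_const. now intros ? ?.
Qed.

(* the squared distance from q to the part of Delta a above the abscissa x *)
Definition fiber_dist2 (a : R) (q : R * R) (x : R) : R :=
  (fst q - x) ^ 2 + Rmax 0 (bnd a x - snd q) ^ 2.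

Lemma fiber_dist2_continuous a q x : 0 < a -> - (PI / 2) < th a x < PI / 2 ->
  continuity_pt (fiber_dist2 a q) x.
Proof.
  intros ha Hx. unfold fiber_dist2.
  apply (continuity_pt_plus (fun x => (fst q - x) ^ 2) (fun x => Rmax 0 (bnd a x - snd q) ^ 2)).
  - apply derivable_continuous_pt. reg.
  - refine (continuity_pt_comp (fun x => Rmax 0 (bnd a x - snd q)) (fun t => t ^ 2) x _ _);
      [| apply derivable_continuous_pt; reg].
    refine (continuity_pt_comp (fun x => bnd a x - snd q) (Rmax 0) x _ (continuity_pt_Rmax_0 _)).
    apply (continuity_pt_minus (bnd a) (fun _ => snd q)).
    + now apply bnd_continuous.
    + apply continuity_pt_const. now intros ? ?.
Qed.

Lemma fiber_dist2_min a q : 0 < a -> exists x0, - (PI / 2) < th a x0 < PI / 2 /\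
  forall x, - (PI / 2) < th a x < PI / 2 -> fiber_dist2 a q x0 <= fiber_dist2 a q x.
Proof.
  intros ha. pose proof PI_RGT_0. pose proof PI2_1.
  set (c := a * PI / 2). assert (hc : 0 < c) by (unfold c; nra).
  set (xm := 1 - 3 * a - 1 / a).
  assert (Hth : forall x, th a x = c * (x - xm)) by (intros x; unfold th, c, xm; field; lra).
  set (M := fiber_dist2 a q xm).
  set (B := Rabs (snd q) + sqrt M + 1).
  assert (hB : 0 < B) by (unfold B; pose proof (Rabs_pos (snd q)); pose proof (sqrt_pos M); lra).
  set (e := exp (- (c * B))).
  assert (he : 0 < e < 1).
  { unfold e; split; [apply exp_pos |]. rewrite <- exp_0. apply exp_increasing. nra. }
  (* outside [xm - r, xm + r] the boundary is higher than B, so fiber_dist2 exceeds M *)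
  set (r := (PI / 2 - e) / c).
  assert (hr : 0 < r) by (unfold r; apply Rdiv_lt_0_compat; lra).
  assert (Hcr : c * r = PI / 2 - e) by (unfold r; field; lra).
  assert (Hin : forall x, xm - r <= x <= xm + r -> - (PI / 2) < th a x < PI / 2).
  { intros x Hx. rewrite Hth. split; nra. }
  destruct (continuity_ab_min (fiber_dist2 a q) (xm - r) (xm + r)) as [x0 [Hx0 Hx0r]]; [lra | |].
  { intros y Hy. apply fiber_dist2_continuous; auto. }
  exists x0. split; [now apply Hin |].
  intros x Hx.
  destruct (Rle_dec (Rabs (x - xm)) r) as [Hnear | Hfar].
  { apply Hx0. apply Rabs_le_between in Hnear. lra. }
  assert (HM : fiber_dist2 a q x0 <= M) by (apply Hx0; lra).
  assert (Hb : B < bnd a x).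
  { apply bnd_gt_near_ends; auto. fold c e. rewrite Hth, Rabs_mult, (Rabs_right c), <- Hcr by lra.
    apply Rmult_lt_compat_l; lra. }
  assert (HMs : sqrt M ^ 2 = M) by (apply pow2_sqrt, Rplus_le_le_0_compat; apply pow2_ge_0).
  pose proof (sqrt_pos M). pose proof (Rle_abs (snd q)).
  unfold fiber_dist2 at 2. rewrite Rmax_right by (unfold B in Hb; lra).
  assert (sqrt M < bnd a x - snd q) by (unfold B in Hb; lra).
  assert (M < (bnd a x - snd q) ^ 2) by (rewrite <- HMs; nra).
  pose proof (pow2_ge_0 (fst q - x)). lra.
Qed.

Lemma Delta_nearest_exists a : 0 < a -> forall q, exists p, nearest (Delta a) q p.
Proof.
  intros ha q. destruct (fiber_dist2_min a q ha) as [x0 [Hx0 Hmin]].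
  exists (x0, snd q + Rmax 0 (bnd a x0 - snd q)). split.
  - apply Delta_th; [exact ha |]. cbn [fst snd]. split; [exact Hx0 |].
    pose proof (Rmax_r 0 (bnd a x0 - snd q)). lra.
  - intros [x z] Hy. apply Delta_th in Hy as [Hx Hz]; [| exact ha]. cbn [fst snd] in *.
    apply eucl_le_iff_sq; cbn [fst snd].
    pose proof (Hmin x Hx) as Hm. unfold fiber_dist2 in Hm; cbn [fst snd] in Hm.
    assert (Rmax 0 (bnd a x - snd q) ^ 2 <= (snd q - z) ^ 2).
    { destruct (Rle_dec (bnd a x - snd q) 0) as [Hn | Hn].
      - rewrite Rmax_left by lra. rewrite pow_i by lia. apply pow2_ge_0.
      - rewrite Rmax_right by lra. replace ((snd q - z) ^ 2) with ((z - snd q) ^ 2) by ring.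
        apply pow_incr; lra. }
    replace ((snd q - (snd q + Rmax 0 (bnd a x0 - snd q))) ^ 2)
      with (Rmax 0 (bnd a x0 - snd q) ^ 2) by ring.
    lra.
Qed.

Lemma locally_pos_of_ex_derive (f : R -> R) x : ex_derive f x -> 0 < f x ->
  locally x (fun y => 0 < f y).
Proof. intros Hd Hpos. apply (ex_derive_continuous f x Hd). exact (open_gt 0 (f x) Hpos). Qed.

Lemma locally_admissible a x : 0 < a -> - (PI / 2) < th a x < PI / 2 ->
  locally x (fun y => - (PI / 2) < th a y < PI / 2).
Proof.
  intros ha Hx. apply th_range in Hx; [| exact ha].
  apply (filter_imp (fun y => - 2 / a + 1 - 3 * a < y /\ y < 1 - 3 * a)).
  - intros y Hy. now apply th_range.
  - exact (open_and _ _ (open_gt _) (open_lt _) x Hx).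
Qed.

Lemma Delta_line_interior a p w : 0 < a ->
  - (PI / 2) < th a (fst p) < PI / 2 -> bnd a (fst p) < snd p ->
  locally 0 (fun t => Delta a (line p w t)).
Proof.
  intros ha Hx Hz.
  assert (Hb : ex_derive (bnd a) (fst p + 0 * fst w))
    by (rewrite Rmult_0_l, Rplus_0_r; eexists; now apply bnd_derive).
  apply th_range in Hx; [| exact ha].
  assert (H1 := locally_pos_of_ex_derive (fun t => fst p + t * fst w - (- 2 / a + 1 - 3 * a)) 0
    ltac:(auto_derive; auto) ltac:(cbv beta; lra)).
  assert (H2 := locally_pos_of_ex_derive (fun t => 1 - 3 * a - (fst p + t * fst w)) 0
    ltac:(auto_derive; auto) ltac:(cbv beta; lra)).
  assert (H3 := locally_pos_of_ex_derive (fun t => snd p + t * snd w - bnd a (fst p + t * fst w)) 0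
    ltac:(auto_derive; auto) ltac:(cbv beta; rewrite !Rmult_0_l, !Rplus_0_r; lra)).
  generalize (filter_and _ _ H1 (filter_and _ _ H2 H3)).
  apply filter_imp. intros t (G1 & G2 & G3). unfold Delta, line; cbn [fst snd]. lra.
Qed.

Lemma Delta_nearest_on_graph a q p : 0 < a -> nearest (Delta a) q p -> ~ Delta a q ->
  snd p = bnd a (fst p).
Proof.
  intros ha Hn Hq. pose proof (proj1 Hn) as Hp. apply Delta_th in Hp as [Hx Hz]; [| exact ha].
  destruct (Rle_lt_or_eq_dec _ _ Hz) as [Hlt | Heq]; [exfalso | now symmetry].
  destruct (Delta_line_interior a p (fst q - fst p, snd q - snd p) ha Hx Hlt) as [eps Heps].
  apply Hq. rewrite (nearest_eq_of_segment (Delta a) (Delta_convex a ha) q p eps Hn (cond_pos eps)).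
  - exact (proj1 Hn).
  - intros t Ht. apply Heps. change (Rabs (t - 0) < eps). rewrite Rminus_0_r, Rabs_right; lra.
Qed.

Lemma Delta_nearest_tangent a q p : 0 < a -> nearest (Delta a) q p -> snd p = bnd a (fst p) ->
  fst q - fst p + (snd q - snd p) * tan (th a (fst p)) = 0.
Proof.
  intros ha Hn Hz. pose proof (proj1 Hn) as Hp. apply Delta_th in Hp as [Hx _]; [| exact ha].
  (* the graph point (x, bnd a x) makes an obtuse angle with q at p, with equality at x = fst p *)
  set (f := fun x => (fst q - fst p) * (x - fst p) + (snd q - snd p) * (bnd a x - snd p)).
  assert (Hd : is_derive f (fst p) (fst q - fst p + (snd q - snd p) * tan (th a (fst p)))).
  { pose proof (bnd_derive a (fst p) ha Hx) as Hb. unfold f. auto_derive.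
    - eexists; exact Hb.
    - replace (Derive (fun x : R => bnd a x) (fst p)) with (tan (th a (fst p)))
        by (symmetry; exact (is_derive_unique _ _ _ Hb)).
      ring. }
  apply (derive_0_at_local_max f (fst p) _ Hd).
  generalize (locally_admissible a (fst p) ha Hx). apply filter_imp. intros x Hx'.
  pose proof (nearest_obtuse (Delta a) (Delta_convex a ha) q p (x, bnd a x) Hn
    ltac:(apply Delta_th; cbn [fst snd]; auto; lra)) as V.
  unfold f. cbn [fst snd] in V. rewrite <- Hz. lra.
Qed.

Lemma Delta_nearest_normal a q p : 0 < a -> nearest (Delta a) q p -> ~ Delta a q ->
  snd p = bnd a (fst p) /\ 0 < eucl q p /\
  fst q - fst p = eucl q p * sin (th a (fst p)) /\
  snd q - snd p = eucl q p * - cos (th a (fst p)).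
Proof.
  intros ha Hn Hq.
  pose proof (Delta_nearest_on_graph a q p ha Hn Hq) as Hg.
  pose proof (Delta_nearest_tangent a q p ha Hn Hg) as Ht.
  pose proof (proj1 Hn) as Hp. apply Delta_th in Hp as [Hx _]; [| exact ha].
  assert (Hup : snd q - snd p <= 0).
  { pose proof (nearest_obtuse (Delta a) (Delta_convex a ha) q p _ Hn
      (Delta_up a p 1 (proj1 Hn) ltac:(lra))) as V.
    unfold line in V; cbn [fst snd] in V. nra. }
  assert (Hlt : snd q - snd p < 0).
  { destruct (Rle_lt_or_eq_dec _ _ Hup) as [Hlt | Heq]; [exact Hlt | exfalso].
    rewrite Heq in Ht. apply Hq.
    replace q with p by (destruct q, p; cbn [fst snd] in *; f_equal; lra). exact (proj1 Hn). }
  set (C := cos (th a (fst p))). set (S := sin (th a (fst p))).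
  assert (HC : 0 < C) by (apply cos_gt_0; lra).
  assert (HSC : S ^ 2 + C ^ 2 = 1) by (unfold S, C; rewrite <- !Rsqr_pow2; apply sin2_cos2).
  unfold tan in Ht. fold S C in Ht.
  set (D := snd p - snd q).
  assert (Hx' : fst q - fst p = D * S / C) by (unfold D; field_simplify; [lra | lra]).
  assert (He : eucl q p = D / C).
  { unfold eucl. rewrite Hx'.
    replace ((D * S / C) ^ 2 + (snd q - snd p) ^ 2) with ((D / C) ^ 2 * (S ^ 2 + C ^ 2))
      by (unfold D; field; lra).
    rewrite HSC, Rmult_1_r. apply sqrt_pow2, Rlt_le, Rdiv_lt_0_compat; unfold D; lra. }
  rewrite He. repeat split.
  - exact Hg.
  - apply Rdiv_lt_0_compat; unfold D; lra.
  - rewrite Hx'. field. lra.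
  - unfold D. field. lra.
Qed.

Lemma bnd_chord a x0 x1 : 0 < a ->
  - (PI / 2) < th a x0 < PI / 2 -> - (PI / 2) < th a x1 < PI / 2 ->
  exists xi, Rabs (xi - x0) <= Rabs (x1 - x0) /\ - (PI / 2) < th a xi < PI / 2 /\
    (x1 - x0) ^ 2 = ((x1 - x0) ^ 2 + (bnd a x1 - bnd a x0) ^ 2) * cos (th a xi) ^ 2.
Proof.
  intros ha H0 H1.
  assert (Hbetween : forall x, Rmin x0 x1 <= x <= Rmax x0 x1 -> - (PI / 2) < th a x < PI / 2).
  { intros x Hx. apply th_range in H0, H1; auto. apply th_range; [exact ha |].
    unfold Rmin, Rmax in Hx. destruct Rle_dec; lra. }
  destruct (MVT_gen (bnd a) x0 x1 (fun x => tan (th a x))) as [xi [Hxi E]].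
  - intros x Hx. apply bnd_derive; [exact ha |]. apply Hbetween. lra.
  - intros x Hx. apply bnd_continuous; [exact ha |]. now apply Hbetween.
  - exists xi. repeat split; try apply (Hbetween xi Hxi).
    + unfold Rmin, Rmax in Hxi. destruct Rle_dec.
      * rewrite !Rabs_right by lra. lra.
      * rewrite !Rabs_left1 by lra. lra.
    + assert (HC : 0 < cos (th a xi)) by (apply cos_gt_0; apply (Hbetween xi Hxi)).
      rewrite E. unfold tan.
      replace ((x1 - x0) ^ 2 + (sin (th a xi) / cos (th a xi) * (x1 - x0)) ^ 2)
        with ((x1 - x0) ^ 2 * (sin (th a xi) ^ 2 + cos (th a xi) ^ 2) / cos (th a xi) ^ 2)
        by (field; lra).
      assert (HSC : sin (th a xi) ^ 2 + cos (th a xi) ^ 2 = 1)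
        by (rewrite <- !Rsqr_pow2; apply sin2_cos2).
      rewrite HSC. field. lra.
Qed.

Lemma Delta_normal_angle_shift a q p0 q' p1 : 0 < a ->
  nearest (Delta a) q p0 -> nearest (Delta a) q' p1 ->
  snd p0 = bnd a (fst p0) -> snd p1 = bnd a (fst p1) ->
  sin (th a (fst p1) - th a (fst p0))
  <= a * PI / 2 * eucl q q' * (cos (th a (fst p0)) + a * PI / 2 * eucl q q').
Proof.
  intros ha Hn0 Hn1 Hz0 Hz1. pose proof PI_RGT_0.
  set (c := a * PI / 2). assert (Hc : 0 < c) by (unfold c; nra).
  pose proof (eucl_ge0 q q') as He. set (e := eucl q q') in *.
  set (x0 := fst p0). set (x1 := fst p1).
  pose proof (proj1 Hn0) as Hp0. pose proof (proj1 Hn1) as Hp1.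
  apply Delta_th in Hp0 as [Hx0 _], Hp1 as [Hx1 _]; auto.
  pose proof (nearest_nonexpansive (Delta a) (Delta_convex a ha) q' p1 q p0 Hn1 Hn0) as Hlip.
  rewrite <- (eucl_sq q' q), (eucl_sym q' q), Hz0, Hz1 in Hlip. fold e x0 x1 in Hlip.
  destruct (bnd_chord a x0 x1 ha Hx0 Hx1) as [xi [Hxi [Hxi_adm Hchord]]].
  set (Cxi := cos (th a xi)) in *.
  assert (HCxi : 0 < Cxi) by (apply cos_gt_0; lra).
  assert (HCxi1 : Cxi <= 1) by apply COS_bound.
  assert (Hdx : Rabs (x1 - x0) <= e * Cxi).
  { assert (Hsq : (x1 - x0) ^ 2 <= (e * Cxi) ^ 2).
    { rewrite Hchord. replace ((e * Cxi) ^ 2) with (e ^ 2 * Cxi ^ 2) by ring.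
      apply Rmult_le_compat_r; [apply pow2_ge_0 | lra]. }
    rewrite <- (Rabs_right (e * Cxi)) by (apply Rle_ge, Rmult_le_pos; lra).
    apply Rsqr_le_abs_0. rewrite !Rsqr_pow2. exact Hsq. }
  assert (HeCxi : e * Cxi <= e) by (rewrite <- (Rmult_1_r e) at 2; apply Rmult_le_compat_l; lra).
  assert (HCxi_le : Cxi <= cos (th a x0) + c * e).
  { pose proof (cos_le_add_dist (th a xi) (th a x0)) as Hcos.
    rewrite th_sub in Hcos. fold c Cxi in Hcos. rewrite Rabs_mult, (Rabs_right c) in Hcos by lra.
    assert (c * Rabs (xi - x0) <= c * e) by (apply Rmult_le_compat_l; lra). lra. }
  assert (Hsin : sin (th a x1 - th a x0) <= c * Rabs (x1 - x0)).
  { eapply Rle_trans; [apply Rle_abs |]. eapply Rle_trans; [apply Rabs_sin_le |].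
    rewrite th_sub. fold c. rewrite Rabs_mult, (Rabs_right c) by lra. apply Rle_refl. }
  assert (c * Rabs (x1 - x0) <= c * (e * Cxi)) by (apply Rmult_le_compat_l; lra).
  assert (c * (e * Cxi) <= c * (e * (cos (th a x0) + c * e)))
    by (apply Rmult_le_compat_l; [lra | apply Rmult_le_compat_l; lra]).
  lra.
Qed.

Lemma ratio_sqrt_mono rho r1 r2 : 0 <= r1 <= r2 -> r2 < rho ->
  r1 / sqrt (rho ^ 2 - r1 ^ 2) <= r2 / sqrt (rho ^ 2 - r2 ^ 2).
Proof.
  intros H1 H2.
  assert (0 < rho ^ 2 - r2 ^ 2) by nra.
  assert (Hs2 : 0 < sqrt (rho ^ 2 - r2 ^ 2)) by (apply sqrt_lt_R0; lra).
  assert (Hs : sqrt (rho ^ 2 - r2 ^ 2) <= sqrt (rho ^ 2 - r1 ^ 2))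
    by (apply sqrt_le_1_alt; nra).
  unfold Rdiv. apply Rmult_le_compat; try lra.
  - left; apply Rinv_0_lt_compat; lra.
  - apply Rinv_le_contravar; lra.
Qed.

Lemma Delta_tangent_gradient_bound a q p0 e A B : 0 < a ->
  nearest (Delta a) q p0 -> ~ Delta a q ->
  0 < e -> e < eucl q p0 / 2 -> eucl q p0 + e < 2 * a ->
  filterdiff (phi a) (locally (line q (cos (th a (fst p0)), sin (th a (fst p0))) e))
    (fun v => A * fst v + B * snd v) ->
  cos (th a (fst p0)) * A + sin (th a (fst p0)) * B
  <= e * ((eucl q p0 + e) / sqrt (4 * a ^ 2 - (eucl q p0 + e) ^ 2) * (a * PI / 2)
          * (cos (th a (fst p0)) + a * PI / 2 * e)).
Proof.
  intros ha Hn Hq He He1 He2 Hf. pose proof PI_RGT_0.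
  pose proof (Delta_nearest_exists a ha) as Hnear.
  destruct (Delta_nearest_normal a q p0 ha Hn Hq) as [Hz0 [Hd0 _]].
  pose proof (proj1 Hn) as Hp0. apply Delta_th in Hp0 as [Hx0 _]; [| exact ha].
  set (d := eucl q p0) in *.
  set (C := cos (th a (fst p0))) in *. set (S := sin (th a (fst p0))) in *.
  assert (HC : 0 < C) by (apply cos_gt_0; lra).
  assert (HSC : S ^ 2 + C ^ 2 = 1) by (unfold S, C; rewrite <- !Rsqr_pow2; apply sin2_cos2).
  set (q' := line q (C, S) e) in *.
  assert (Hqq' : eucl q q' = e)
    by (rewrite eucl_sym; apply eucl_line_unit; [cbn [fst snd]; lra | lra]).
  destruct (Hnear q') as [p1 Hn1].
  pose proof (nearest_dist_lipschitz _ q p0 q' p1 Hn Hn1) as L1.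
  pose proof (nearest_dist_lipschitz _ q' p1 q p0 Hn1 Hn) as L2.
  rewrite (eucl_sym q' q), Hqq' in L2. rewrite Hqq' in L1. fold d in L1, L2.
  set (de := eucl q' p1) in *.
  assert (Hq' : ~ Delta a q').
  { intros Hin. pose proof (set_dist_in _ Hnear q' Hin) as H0.
    rewrite (set_dist_nearest _ q' p1 Hn1) in H0. fold de in H0. lra. }
  destruct (Delta_nearest_normal a q' p1 ha Hn1 Hq') as [Hz1 [_ [Ex1 Ez1]]]. fold de in Ex1, Ez1.
  destruct (phi_set_gradient _ Hnear a q' p1 A B Hn1 ltac:(fold de; lra) Hf) as [-> ->].
  fold de. rewrite Ex1, Ez1.
  set (se := sqrt (4 * a ^ 2 - de ^ 2)).
  assert (Hse : 0 < se) by (apply sqrt_lt_R0; nra).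
  (* the gradient at q' is normal to Delta at p1, so its tangential part is sin of the turning angle *)
  replace (C * (de * sin (th a (fst p1)) / se) + S * (de * - cos (th a (fst p1)) / se))
    with (de / se * sin (th a (fst p1) - th a (fst p0)))
    by (rewrite sin_minus; fold C S; field; lra).
  pose proof (Delta_normal_angle_shift a q p0 q' p1 ha Hn Hn1 Hz0 Hz1) as Hangle.
  rewrite Hqq' in Hangle. fold C in Hangle.
  assert (Hratio : de / se <= (d + e) / sqrt (4 * a ^ 2 - (d + e) ^ 2)).
  { unfold se. replace (4 * a ^ 2) with ((2 * a) ^ 2) by ring.
    apply ratio_sqrt_mono; lra. }
  assert (0 <= de / se) by (apply Rlt_le, Rdiv_lt_0_compat; lra).
  assert (0 <= a * PI / 2 * e * (C + a * PI / 2 * e)).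
  { assert (0 < a * PI / 2 * e) by (apply Rmult_lt_0_compat; nra).
    apply Rmult_le_pos; nra. }
  apply Rle_trans with (de / se * (a * PI / 2 * e * (C + a * PI / 2 * e))).
  - now apply Rmult_le_compat_l.
  - replace (e * ((d + e) / sqrt (4 * a ^ 2 - (d + e) ^ 2) * (a * PI / 2) * (C + a * PI / 2 * e)))
      with ((d + e) / sqrt (4 * a ^ 2 - (d + e) ^ 2) * (a * PI / 2 * e * (C + a * PI / 2 * e)))
      by ring.
    now apply Rmult_le_compat_r.
Qed.

Lemma det2_of_normal_eigenvector hxx hxz hzx hzz S C k :
  S ^ 2 + C ^ 2 = 1 -> hxx * S + hxz * - C = k * S -> hzx * S + hzz * - C = k * - C ->
  hxx * hzz - hxz * hzx = k * (C * (hxx * C + hxz * S) + S * (hzx * C + hzz * S)).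
Proof.
  intros HSC E1 E2.
  replace (k * (C * (hxx * C + hxz * S) + S * (hzx * C + hzz * S)))
    with ((k * S) * (hzx * C + hzz * S) + (k * C) * (hxx * C + hxz * S)) by ring.
  replace (k * S) with (hxx * S + hxz * - C) by lra.
  replace (k * C) with (- (hzx * S + hzz * - C)) by lra.
  transitivity ((hxx * hzz - hxz * hzx) * (S ^ 2 + C ^ 2)); [rewrite HSC; ring | ring].
Qed.

Lemma phi_tangent_hessian_bound a p p0 (gx gz : R * R -> R) (L : R * R -> R * R) : 0 < a ->
  nearest (Delta a) p p0 -> ~ Delta a p -> eucl p p0 < 2 * a ->
  locally p (fun q => filterdiff (phi a) (locally q) (fun v => gx q * fst v + gz q * snd v)) ->
  filterdiff (fun q => (gx q, gz q)) (locally p) L ->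
  cos (th a (fst p0)) * fst (L (cos (th a (fst p0)), sin (th a (fst p0))))
  + sin (th a (fst p0)) * snd (L (cos (th a (fst p0)), sin (th a (fst p0))))
  <= eucl p p0 / sqrt (4 * a ^ 2 - eucl p p0 ^ 2) * (a * PI / 2) * cos (th a (fst p0)).
Proof.
  intros ha Hn Hp Hd Hgrad Hhess. pose proof PI_RGT_0.
  pose proof (Delta_nearest_exists a ha) as Hnear.
  destruct (Delta_nearest_normal a p p0 ha Hn Hp) as [_ [Hd0 [Ex0 Ez0]]].
  destruct (phi_set_gradient _ Hnear a p p0 _ _ Hn Hd (locally_singleton _ _ Hgrad)) as [Gx Gz].
  set (d := eucl p p0) in *.
  set (C := cos (th a (fst p0))) in *. set (S := sin (th a (fst p0))) in *.
  set (c := a * PI / 2).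
  set (F := fun e => (d + e) / sqrt (4 * a ^ 2 - (d + e) ^ 2) * c * (C + c * e)).
  replace (d / sqrt (4 * a ^ 2 - d ^ 2) * c * C) with (F 0)
    by (unfold F; rewrite Rplus_0_r, Rmult_0_r, Rplus_0_r; reflexivity).
  pose proof (filterdiff_line (V := R2) _ p (C, S) _ Hhess) as HG.
  assert (Hu : is_derive (fun e => C * gx (line p (C, S) e) + S * gz (line p (C, S) e)) 0
                 (C * fst (L (C, S)) + S * snd (L (C, S)))).
  { apply (is_derive_plus (fun e => C * gx (line p (C, S) e)) (fun e => S * gz (line p (C, S) e))).
    - apply (is_derive_scal (fun e => gx (line p (C, S) e))), (is_derive_fst _ _ _ HG).
    - apply (is_derive_scal (fun e => gz (line p (C, S) e))), (is_derive_snd _ _ _ HG). }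
  destruct (locally_line _ p (C, S) Hgrad) as [eps Heps].
  set (r := Rmin eps (Rmin (d / 2) ((2 * a - d) / 2))).
  assert (Hr : 0 < r /\ r <= eps /\ r <= d / 2 /\ r <= (2 * a - d) / 2).
  { pose proof (cond_pos eps). pose proof (Rmin_l eps (Rmin (d / 2) ((2 * a - d) / 2))).
    pose proof (Rmin_r eps (Rmin (d / 2) ((2 * a - d) / 2))).
    pose proof (Rmin_l (d / 2) ((2 * a - d) / 2)). pose proof (Rmin_r (d / 2) ((2 * a - d) / 2)).
    assert (0 < r) by (unfold r; repeat apply Rmin_glb_lt; lra). unfold r in *. lra. }
  apply (is_derive_le_of_right_bound _ F _ r Hu ltac:(lra)).
  - intros e He. rewrite line_0, Gx, Gz, Ex0, Ez0. fold d.
    replace (C * (d * S / sqrt (4 * a ^ 2 - d ^ 2)) + S * (d * - C / sqrt (4 * a ^ 2 - d ^ 2)))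
      with 0 by (field; apply Rgt_not_eq, sqrt_lt_R0; nra).
    rewrite Rminus_0_r.
    apply (Delta_tangent_gradient_bound a p p0 e); auto; try (fold d; lra).
    apply Heps. change (Rabs (e - 0) < eps). rewrite Rminus_0_r, Rabs_right; lra.
  - apply derivable_continuous_pt, ex_derive_Reals_0. unfold F. auto_derive.
    assert (0 < sqrt (4 * a ^ 2 - d ^ 2)) by (apply sqrt_lt_R0; nra).
    replace (4 * (a * (a * 1)) + - ((d + 0) * ((d + 0) * 1))) with (4 * a ^ 2 - d ^ 2) by ring.
    repeat split; nra.
Qed.

Lemma phi_hessian_bound_outside a p (gx gz : R * R -> R) hxx hxz hzx hzz : 0 < a ->
  0 < dist_Delta a p < 2 * a ->
  locally p (fun q => filterdiff (phi a) (locally q) (fun v => gx q * fst v + gz q * snd v)) ->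
  filterdiff (fun q => (gx q, gz q)) (locally p)
    (fun v => (hxx * fst v + hxz * snd v, hzx * fst v + hzz * snd v)) ->
  (hxx * hzz - hxz * hzx) / Rpower (1 + gx p ^ 2 + gz p ^ 2) (3 / 2) <= - (PI / 4) * gz p.
Proof.
  intros ha Hdist Hgrad Hhess. pose proof PI_RGT_0.
  pose proof (Delta_convex a ha) as Hconv. pose proof (Delta_nearest_exists a ha) as Hnear.
  destruct (Hnear p) as [p0 Hn].
  change (dist_Delta a p) with (set_dist (Delta a) p) in Hdist.
  rewrite (set_dist_nearest _ p p0 Hn) in Hdist.
  assert (Hp : ~ Delta a p).
  { intros Hin. pose proof (set_dist_in _ Hnear p Hin) as H0.
    rewrite (set_dist_nearest _ p p0 Hn) in H0. lra. }
  destruct (Delta_nearest_normal a p p0 ha Hn Hp) as [_ [_ [Ex0 Ez0]]].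
  destruct (phi_set_gradient _ Hnear a p p0 _ _ Hn ltac:(lra) (locally_singleton _ _ Hgrad))
    as [Gx Gz].
  pose proof (phi_set_hessian_normal _ Hconv Hnear a p p0 (sin (th a (fst p0)), - cos (th a (fst p0)))
    gx gz _ Hn Hdist Ex0 Ez0 ltac:(cbn [fst snd]; rewrite <- !Rsqr_pow2, <- Rsqr_neg; apply sin2_cos2)
    Hgrad Hhess) as [N1 N2].
  pose proof (phi_tangent_hessian_bound a p p0 gx gz _ ha Hn Hp ltac:(lra) Hgrad Hhess) as HT.
  cbn [fst snd] in N1, N2, HT.
  rewrite Ex0 in Gx. rewrite Ez0 in Gz.
  set (d := eucl p p0) in *.
  set (C := cos (th a (fst p0))) in *. set (S := sin (th a (fst p0))) in *.
  set (s0 := sqrt (4 * a ^ 2 - d ^ 2)) in *.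
  set (k := 4 * a ^ 2 / s0 ^ 3) in N1, N2.
  assert (HC : 0 < C).
  { apply cos_gt_0; apply (proj1 (Delta_th a p0 ha) (proj1 Hn)). }
  assert (HSC : S ^ 2 + C ^ 2 = 1) by (unfold S, C; rewrite <- !Rsqr_pow2; apply sin2_cos2).
  assert (Hs0 : 0 < s0) by (apply sqrt_lt_R0; nra).
  assert (Hs02 : s0 ^ 2 = 4 * a ^ 2 - d ^ 2) by (apply pow2_sqrt; nra).
  rewrite (det2_of_normal_eigenvector hxx hxz hzx hzz S C k HSC N1 N2), Gx, Gz.
  assert (Hden : 1 + (d * S / s0) ^ 2 + (d * - C / s0) ^ 2 = (2 * a / s0) ^ 2).
  { replace (1 + (d * S / s0) ^ 2 + (d * - C / s0) ^ 2)
      with ((s0 ^ 2 + d ^ 2 * (S ^ 2 + C ^ 2)) / s0 ^ 2) by (field; lra).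
    rewrite HSC. replace (s0 ^ 2 + d ^ 2 * 1) with (4 * a ^ 2) by lra. field. lra. }
  rewrite Hden, Rpower_3_2 by (apply pow_lt, Rdiv_lt_0_compat; lra).
  rewrite sqrt_pow2 by (apply Rlt_le, Rdiv_lt_0_compat; lra).
  assert (Hk : 0 < k) by (unfold k; apply Rdiv_lt_0_compat; [nra | apply pow_lt; lra]).
  assert (Hden2 : 0 < (2 * a / s0) ^ 2 * (2 * a / s0))
    by (apply Rmult_lt_0_compat; [apply pow_lt |]; apply Rdiv_lt_0_compat; lra).
  apply Rle_trans with (k * (d / s0 * (a * PI / 2) * C) / ((2 * a / s0) ^ 2 * (2 * a / s0))).
  - unfold Rdiv. apply Rmult_le_compat_r; [left; apply Rinv_0_lt_compat; lra |].
    apply Rmult_le_compat_l; lra.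
  - right. unfold k. field. lra.
Qed.


Lemma phi_hessian_bound_in_Delta a p (gx gz : R * R -> R) hxx hxz hzx hzz : 0 < a ->
  dist_Delta a p = 0 ->
  locally p (fun q => filterdiff (phi a) (locally q) (fun v => gx q * fst v + gz q * snd v)) ->
  filterdiff (fun q => (gx q, gz q)) (locally p)
    (fun v => (hxx * fst v + hxz * snd v, hzx * fst v + hzz * snd v)) ->
  (hxx * hzz - hxz * hzx) / Rpower (1 + gx p ^ 2 + gz p ^ 2) (3 / 2) <= - (PI / 4) * gz p.
Proof.
  intros ha Hdist Hgrad Hhess.
  pose proof (Delta_nearest_exists a ha) as Hnear.
  destruct (Hnear p) as [p0 Hn].
  change (dist_Delta a p) with (set_dist (Delta a) p) in Hdist.
  rewrite (set_dist_nearest _ p p0 Hn) in Hdist. apply eucl_eq0 in Hdist. subst p0.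
  destruct (phi_set_gradient_in _ Hnear a ha p _ _ (proj1 Hn) (locally_singleton _ _ Hgrad))
    as [_ ->].
  (* Delta is closed upwards, so the gradient vanishes on a vertical ray and the Hessian kills (0, 1) *)
  destruct (phi_set_hessian_vanishes_on_ray _ Hnear a ha p (0, 1) 1 gx gz _ Rlt_0_1
    (fun t Ht => Delta_up a p t (proj1 Hn) (proj1 Ht)) Hgrad Hhess) as [H1 H2].
  cbn [fst snd] in H1, H2.
  replace (hxx * hzz - hxz * hzx) with 0 by (replace hxz with 0 by lra; replace hzz with 0 by lra; ring).
  unfold Rdiv. rewrite Rmult_0_l. lra.
Qed.

Lemma dom_phi_dist_le a p : 0 < a -> dom_phi a p -> dist_Delta a p <= 2 * a.
Proof.
  intros ha Hp. destruct (Rle_dec (dist_Delta a p) (2 * a)) as [H | H]; [exact H | exfalso].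
  destruct (Hp (dist_Delta a p - 2 * a)) as [q [[Hq _] Hpq]]; [lra |].
  pose proof (set_dist_lipschitz _ (Delta_nearest_exists a ha) p q) as Hlip.
  change (dist_Delta a p <= dist_Delta a q + eucl p q) in Hlip. lra.
Qed.

Theorem lemma4p3 (a : R) (ha : 0 < a < 1 / 6) :
  convex_on (dom_phi a) (phi a) /\
  forall (p : R * R) (gx gz : R * R -> R) (hxx hxz hzx hzz : R),
    dom_phi a p ->
    (* phi is differentiable near p with gradient (gx, gz) *)
    locally p (fun q =>
      filterdiff (phi a) (locally q) (fun v => gx q * fst v + gz q * snd v)) ->
    (* the gradient is differentiable at p, with Hessian [[hxx hxz];[hzx hzz]] *)
    filterdiff (fun q => (gx q, gz q)) (locally p)
      (fun v => (hxx * fst v + hxz * snd v, hzx * fst v + hzz * snd v)) ->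
    (hxx * hzz - hxz * hzx) / Rpower (1 + gx p ^ 2 + gz p ^ 2) (3 / 2)
      <= - (PI / 4) * gz p.
Proof.
  assert (ha0 : 0 < a) by lra.
  pose proof (Delta_convex a ha0) as Hconv. pose proof (Delta_nearest_exists a ha0) as Hnear.
  split.
  - intros p q Hp Hq _ t Ht.
    exact (phi_set_convex _ Hconv Hnear a ha0 p q t
      (dom_phi_dist_le a p ha0 Hp) (dom_phi_dist_le a q ha0 Hq) Ht).
  - intros p gx gz hxx hxz hzx hzz Hdom Hgrad Hhess.
    pose proof (dom_phi_dist_le a p ha0 Hdom) as Hle. pose proof (set_dist_ge0 _ Hnear p) as Hge.
    change (set_dist (Delta a) p) with (dist_Delta a p) in Hge.
    destruct (Req_dec (dist_Delta a p) 0) as [Hzero | Hpos].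
    { now apply (phi_hessian_bound_in_Delta a). }
    destruct (Req_dec (dist_Delta a p) (2 * a)) as [Hedge | Hinner].
    { exfalso. exact (phi_set_not_differentiable_at_edge _ Hconv Hnear a ha0 p _ _ Hedge
        (locally_singleton _ _ Hgrad)). }
    apply (phi_hessian_bound_outside a); auto. lra.
Qed.
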